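(* Let $X$ be a finite discrete space with at least two elements, $\Gamma$ a nonempty countable set, $\varphi:\Gamma\to\Gamma$ any map, and $\sigma_\varphi:X^\Gamma\to X^\Gamma$ the generalized shift. Then each of the following is equivalent to ''$\varphi$ has at least one non-quasi-periodic point'': $(X^\Gamma,\sigma_\varphi)$ is $\omega^u_u$-chaotic; it is $\omega^u_\infty$-chaotic; it is $\omega^u_2$-chaotic; it is $\omega^\infty_\infty$-chaotic; it is $\omega^\infty_2$-chaotic.
   Context: $X^\Gamma$ carries the product topology (compact metrizable). The generalized shift is $\sigma_\varphi((x_\alpha)_{\alpha\in\Gamma})=(x_{\varphi(\alpha)})_{\alpha\in\Gamma}$. A point $\theta\in\Gamma$ is quasi-periodic for $\varphi$ if $\{\varphi^n(\theta):n\ge0\}$ is finite; otherwise it is non-quasi-periodic. For a continuous $f:Y\to Y$ on a compact metric space, $Per(f)$ is the set of periodic points, and for $a\in Y$, $\omega_f(a)$ is the set of $z\in Y$ such that $z=\lim_k f^{n_k}(a)$ for some strictly increasing sequence $(n_k)$ of natural numbers. Points $x,y$ are $\omega^u$-scrambled (resp. $\omega^\infty$-scrambled) if $\omega_f(x)\setminus\omega_f(y)$ is uncountable (resp. infinite), $\omega_f(x)\cap\omega_f(y)\neq\varnothing$, and $\omega_f(x)\setminus Per(f)\neq\varnothing$. A set with at least two elements is $\omega^u$- (resp. $\omega^\infty$-) scrambled if every pair of distinct points in it is. $f$ is $\omega^u_u$-, $\omega^u_\infty$-, $\omega^u_2$-chaotic if $Y$ has an uncountable, infinite, resp. at least two-element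 $\omega^u$-scrambled set; $f$ is $\omega^\infty_\infty$-, $\omega^\infty_2$-chaotic if $Y$ has an infinite, resp. at least two-element $\omega^\infty$-scrambled set. *)

From HB Require Import structures.
From mathcomp Require Import all_boot all_order all_algebra.
From mathcomp Require Import all_classical all_reals all_analysis.
Set Implicit Arguments. Unset Strict Implicit. Unset Printing Implicit Defensive.
Import Order.TTheory GRing.Theory Num.Theory.
Local Open Scope classical_set_scope.

Definition Per (Y : Type) (f : Y -> Y) : set Y :=
  [set y | exists n : nat, (0 < n)%N /\ iter n f y = y].

Definition omega_lim (Y : topologicalType) (f : Y -> Y) (a : Y) : set Y :=
  [set z | exists n : nat -> nat, (forall k, (n k < n k.+1)%N) /\
                                  (fun k => iter (n k) f a) @ \oo --> z].

Definition omega_u_scrambled_pair (Y : topologicalType) (f : Y -> Y) (x y : Y) :=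
  [/\ ~ countable (omega_lim f x `\` omega_lim f y),
      omega_lim f x `&` omega_lim f y !=set0 &
      omega_lim f x `\` Per f !=set0].

Definition omega_inf_scrambled_pair (Y : topologicalType) (f : Y -> Y) (x y : Y) :=
  [/\ infinite_set (omega_lim f x `\` omega_lim f y),
      omega_lim f x `&` omega_lim f y !=set0 &
      omega_lim f x `\` Per f !=set0].

Definition scrambled_set (Y : Type) (P : Y -> Y -> Prop) (S : set Y) :=
  (exists x y, [/\ S x, S y & x <> y]) /\
  (forall x y, S x -> S y -> x <> y -> P x y).

Definition omega_u_u_chaotic (Y : topologicalType) (f : Y -> Y) :=
  exists S : set Y, scrambled_set (omega_u_scrambled_pair f) S /\ ~ countable S.
Definition omega_u_inf_chaotic (Y : topologicalType) (f : Y -> Y) :=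
  exists S : set Y, scrambled_set (omega_u_scrambled_pair f) S /\ infinite_set S.
Definition omega_u_2_chaotic (Y : topologicalType) (f : Y -> Y) :=
  exists S : set Y, scrambled_set (omega_u_scrambled_pair f) S.
Definition omega_inf_inf_chaotic (Y : topologicalType) (f : Y -> Y) :=
  exists S : set Y, scrambled_set (omega_inf_scrambled_pair f) S /\ infinite_set S.
Definition omega_inf_2_chaotic (Y : topologicalType) (f : Y -> Y) :=
  exists S : set Y, scrambled_set (omega_inf_scrambled_pair f) S.

Definition quasi_periodic (G : Type) (phi : G -> G) (theta : G) :=
  finite_set (range (fun n : nat => iter n phi theta)).

Definition gen_shift_space (X : finType) (G : Type) :=
  {ptws G -> discrete_topology X}.

Definition gen_shift (X : finType) (G : Type) (phi : G -> G)
  (x : gen_shift_space X G) : gen_shift_space X G :=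
  fun a => x (phi a).

From HB Require Import structures.
From mathcomp Require Import all_boot all_order all_algebra.
From mathcomp Require Import all_classical all_reals all_analysis.
From mathcomp Require Import zify.
Set Implicit Arguments. Unset Strict Implicit. Unset Printing Implicit Defensive.
Local Open Scope classical_set_scope.

(* If every point of [G] is quasi-periodic, finitely many coordinates share an
   eventual period, so two omega-limit points of one orbit approach each other;
   omega-limit sets that meet are therefore nested and no pair is even
   omega^infty-scrambled.
   Conversely, along an injective orbit [th, phi th, phi^2 th, ...] the shift acts
   as the one-sided shift on 0/1 sequences.  For [t : nat -> bool] we build a
   sequence containing, arbitrarily late, every word "run of [marker i (t i)] ones,
   then arbitrary bits separated by zeros", and no other runs of ones of length at
   least 2.  Its omega-limit set contains uncountably many points that are missed
   by the omega-limit set for any [t'] with [t' i != t i], always contains the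
   constant point, and contains a non-periodic point. *)

Section OmegaLimitGenShift.
Variables (X : finType) (G : countType) (phi : G -> G).

Local Notation space := (gen_shift_space X G).
Local Notation s := (gen_shift phi).

Lemma gen_shift_cvgP (u : nat -> space) (z : space) :
  u @ \oo --> z <-> forall g, \forall k \near \oo, u k g = z g.
Proof.
rewrite (@pointwise_cvgP (discrete_topology G) (discrete_topology X)).
split=> H g; first by have /(@discrete_cvg (discrete_topology X)) := H g.
exact/(@discrete_cvg (discrete_topology X))/H.
Qed.

Lemma iter_gen_shift n (x : space) g : iter n s x g = x (iter n phi g).
Proof. by elim: n x g => // n IH x g; rewrite iterSr IH iterS. Qed.

Definition approaches (x z : space) :=
  forall (F : seq G) N, exists2 n, (N <= n)%N &
    forall g, g \in F -> x (iter n phi g) = z g.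

Lemma omega_lim_gen_shiftP x z : omega_lim s x z <-> approaches x z.
Proof.
split=> [[n [n_incr /gen_shift_cvgP xz]] F N|xz].
  have [M _ nearF] : \forall k \near \oo, forall g, g \in F -> iter (n k) s x g = z g.
    elim: F => [|g F IH]; first exact: nearW.
    by apply: filterS2 (xz g) IH => k xzg xzF h /predU1P[->|/xzF].
  have n_ge k : (k <= n k)%N by elim: k => // k IH; exact: leq_ltn_trans IH (n_incr k).
  exists (n (maxn M N)); first exact: leq_trans (leq_maxr M N) (n_ge _).
  by move=> g gF; rewrite -iter_gen_shift nearF //= leq_maxl.
(* [Fk k] exhausts the countable [G], and [n k] is chosen good on [Fk k]. *)
pose Fk k := pmap (@unpickle G) (iota 0 k).
have next (k N : nat) : {n | (N <= n)%N /\ forall g, g \in Fk k -> x (iter n phi g) = z g}.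
  by apply: cid; have [n Nn Fn] := xz (Fk k) N; exists n.
pose fix n k := sval (next k (if k is k'.+1 then (n k').+1 else 0%N)).
exists n; split=> [k|]; first by case: (svalP (next k.+1 (n k).+1)).
apply/gen_shift_cvgP => g; exists (pickle g).+1 => // -[//|k] gk.
rewrite iter_gen_shift; apply: (proj2 (svalP (next k.+1 (n k).+1))).
by rewrite mem_pmap; apply/mapP; exists (pickle g); rewrite ?pickleK ?mem_iota.
Qed.

Lemma approaches_trans y w u : approaches y w -> approaches w u -> approaches y u.
Proof.
move=> yw wu F N; have [a Na wuF] := wu F N.
have [b _ ywF] := yw (map (iter a phi) F) 0%N.
exists (b + a)%N => [|g gF]; first exact: leq_trans Na (leq_addl _ _).
by rewrite iterD ywF ?wuF ?map_f.
Qed.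

End OmegaLimitGenShift.

Section QuasiPeriodic.
Variables (G : Type) (phi : G -> G).

Lemma iter_eq_mod th i j : (i < j)%N -> iter i phi th = iter j phi th ->
  forall a b, (i <= a)%N -> (i <= b)%N -> a = b %[mod j - i] ->
  iter a phi th = iter b phi th.
Proof.
move=> ij eq_ij.
have shift n : (i <= n)%N -> iter (n + (j - i)) phi th = iter n phi th.
  move=> ni; rewrite -(subnK ni) -addnA subnKC; last exact: ltnW.
  by rewrite !iterD eq_ij.
suff le_case a b : (i <= a <= b)%N -> a = b %[mod j - i] -> iter a phi th = iter b phi th.
  move=> a b ia ib ab_mod; case: (leqP a b) => ab; first by rewrite (le_case a b) ?ia.
  by rewrite (le_case b a) ?ib ?(ltnW ab).
move=> /andP[ia ab] /eqP; rewrite eq_sym eqn_mod_dvd // => /dvdnP[q eq_ba].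
rewrite -(subnKC ab) eq_ba; elim: q {eq_ba} => [|q IH]; first by rewrite addn0.
by rewrite mulSn addnCA addnC shift // (leq_trans ia) ?leq_addr.
Qed.

Lemma quasi_periodicP th : quasi_periodic phi th <->
  exists i j, (i < j)%N /\ iter i phi th = iter j phi th.
Proof.
split=> [|[i [j [ij eq_ij]]]].
  move=> /finite_range_cst_subsequence[v [A infA Av]].
  have [k1 Ak1] := infinite_setN0 infA.
  have [k2 [Ak2 /eqP k21]] := infinite_setN0 (infinite_setD infA (finite_set1 k1)).
  have eq12 : iter k1 phi th = iter k2 phi th by rewrite (Av _).1 ?(Av _).1.
  by case: (ltngtP k1 k2) k21 => // k12 _; [exists k1, k2 | exists k2, k1].
apply: (sub_finite_set (B := [set iter k phi th | k in `I_j])); last first.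
  exact/finite_image/finite_II.
move=> _ [n _ <-]; case: (ltnP n i) => [ni|ni].
  by exists n => //=; exact: ltn_trans ni ij.
exists (i + (n - i) %% (j - i))%N; first by rewrite /= -ltn_subRL ltn_pmod ?subn_gt0.
apply: (iter_eq_mod ij eq_ij) => //; first exact: leq_addr.
by rewrite modnDmr subnKC.
Qed.

End QuasiPeriodic.

Lemma quasi_periodic_common_period (G : eqType) (phi : G -> G) (F : seq G) :
  (forall g, quasi_periodic phi g) ->
  exists M P, (0 < P)%N /\ forall g a b, g \in F -> (M <= a)%N -> (M <= b)%N ->
    a = b %[mod P] -> iter a phi g = iter b phi g.
Proof.
move=> qp; elim: F => [|g F [M [P [P_gt0 perF]]]]; first by exists 0%N, 1%N.
have [i [j [ij eq_ij]]] := (quasi_periodicP phi g).1 (qp g).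
exists (maxn i M), ((j - i) * P)%N; split=> [|h a b]; first by rewrite muln_gt0 subn_gt0 ij.
have mod_dvd d : d %| (j - i) * P -> a = b %[mod (j - i) * P] -> a = b %[mod d].
  by move=> dP ab; rewrite -(modn_dvdm a dP) ab modn_dvdm.
rewrite !geq_max => /predU1P[->|hF] /andP[ia Ma] /andP[ib Mb] /mod_dvd ab.
  exact: (iter_eq_mod ij eq_ij) (ab _ (dvdn_mulr _ (dvdnn _))).
exact: perF (ab _ (dvdn_mull _ (dvdnn _))).
Qed.

Section AllQuasiPeriodic.
Variables (X : finType) (G : countType) (phi : G -> G).
Hypothesis qp : forall g, quasi_periodic phi g.

Local Notation s := (@gen_shift X G phi).

Lemma approaches_of_quasi_periodic (x w u : gen_shift_space X G) :
  approaches phi x w -> approaches phi x u -> approaches phi w u.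
Proof.
move=> xw xu F N.
have [M [P [P_gt0 perF]]] := quasi_periodic_common_period F qp.
have [l Ml xuF] := xu F M.
pose F' := [seq iter j phi g | g <- F, j <- iota (P * N) P].
have [n Mn xwF'] := xw F' M.
(* [r] lies in [P * N, P * N + P) and satisfies [n + r = l %[mod P]]. *)
pose r := (P * N + (l + (P - 1) * n) %% P)%N.
have Nr : (N <= r)%N by rewrite (leq_trans (leq_pmull _ P_gt0)) ?leq_addr.
exists r => // g gF.
have rF' : iter r phi g \in F'.
  apply: (allpairs_f (fun g j => iter j phi g)) => //.
  by rewrite mem_iota leq_addr ltn_add2l ltn_pmod.
rewrite -xwF' // -iterD -xuF //; congr (x _); apply: perF => //.
  exact: leq_trans Mn (leq_addr _ _).
rewrite /r addnA modnDmr.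
have -> : (n + P * N + (l + (P - 1) * n) = (n + N) * P + l)%N.
  by case: P {F' xwF' r Nr rF'} P_gt0 => // P' _; rewrite subn1 /=; lia.
by rewrite modnMDl.
Qed.

Lemma omega_lim_sub_of_quasi_periodic (x y : gen_shift_space X G) :
  omega_lim s x `&` omega_lim s y !=set0 -> omega_lim s x `<=` omega_lim s y.
Proof.
move=> [w [/omega_lim_gen_shiftP xw /omega_lim_gen_shiftP yw]] u /omega_lim_gen_shiftP xu.
apply/omega_lim_gen_shiftP; apply: approaches_trans yw _.
exact: approaches_of_quasi_periodic xw xu.
Qed.

Lemma not_omega_inf_2_chaotic_of_quasi_periodic : ~ omega_inf_2_chaotic s.
Proof.
move=> [S [[x [y [Sx Sy xy]]] scrambled]].
have [/infinite_setN0[u [xu yu]] xy_meet _] := scrambled x y Sx Sy xy.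
exact/yu/(omega_lim_sub_of_quasi_periodic xy_meet).
Qed.

End AllQuasiPeriodic.

Definition is_run (b : nat -> bool) (p m : nat) : Prop :=
  [/\ b p = false, forall j, (0 < j <= m)%N -> b (p + j) & b (p + m.+1) = false].

(* The sequence 0 1^m 0 (f 0) 0 (f 1) 0 (f 2) ...: besides the leading run, all
   its runs of ones have length 1. *)
Definition pattern (m : nat) (f : nat -> bool) (h : nat) : bool :=
  if (h <= m.+1)%N then (0 < h <= m)%N else ~~ odd (h - m.+2) && f (h - m.+2)./2.

Lemma pattern_head m f h : (h <= m.+1)%N -> pattern m f h = (0 < h <= m)%N.
Proof. by rewrite /pattern => ->. Qed.

Lemma pattern_tail m f h : (m.+1 < h)%N ->
  pattern m f h = ~~ odd (h - m.+2) && f (h - m.+2)./2.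
Proof. by rewrite /pattern ltnNge => /negbTE ->. Qed.

Lemma pattern0 m f : pattern m f 0 = false.
Proof. by []. Qed.

Lemma pattern_bit m f j : pattern m f (m.+2 + j.*2) = f j.
Proof. by rewrite pattern_tail ?addKn ?odd_double ?doubleK // addSn ltnS leq_addr. Qed.

Lemma pattern_is_run m f : is_run (pattern m f) 0 m.
Proof.
split=> [|j /andP[j_gt0 jm]|]; rewrite ?add0n.
- by rewrite pattern_head.
- by rewrite pattern_head ?j_gt0 ?jm ?leqW.
- by rewrite pattern_head // ltnn andbF.
Qed.

Lemma pattern_run m f p m' : (0 < m')%N -> is_run (pattern m f) p m' ->
  m' = m \/ m' = 1%N.
Proof.
move=> m'_gt0 [p_off run_on run_end].
case: (leqP p m) => [p_le|p_gt]; [left|right].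
  have p0 : p = 0%N.
    move: p_off; rewrite pattern_head ?leqW // p_le andbT => /negbT.
    by rewrite lt0n negbK => /eqP.
  rewrite {}p0 add0n in run_on run_end.
  case: (ltngtP m' m) => [lt|gt|//].
    by move: run_end; rewrite pattern_head ?ltnS ?(ltnW lt) // lt.
  by have := run_on m.+1; rewrite gt pattern_head // ltnn andbF => /(_ isT).
have even_on j : (0 < j <= m')%N -> ~~ odd (p + j - m.+2).
  move=> jm; have := run_on j jm; rewrite pattern_tail => [/andP[] //|]; lia.
case: (ltnP 1 m') => [m'_gt1|]; last lia.
have := even_on 2%N; rewrite m'_gt1 (_ : p + 2 - m.+2 = (p + 1 - m.+2).+1)%N; last lia.
by rewrite /= negbK (negbTE (even_on 1%N _)) ?(ltnW m'_gt1) // => /(_ isT).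
Qed.

Lemma pattern_mkseq m f K h : (h <= K)%N ->
  pattern m (nth false (mkseq f K)) h = pattern m f h.
Proof.
move=> hK; case: (leqP h m.+1) => [hm|hm]; first by rewrite !pattern_head.
by rewrite !pattern_tail // nth_mkseq //; lia.
Qed.

Lemma pattern_nth_oversize m u h : (m.+2 + (size u).*2 <= h)%N ->
  pattern m (nth false u) h = false.
Proof.
move=> hu; rewrite pattern_tail; last lia.
by rewrite nth_default ?andbF //; lia.
Qed.

Definition marker (i : nat) (b : bool) : nat := (2 * i + b).+2.

Lemma marker_inj i b i' b' : marker i b = marker i' b' -> i = i' /\ b = b'.
Proof. by case: b; case: b' => -[] /= ?; split => //; lia. Qed.

Definition block_param (k : nat) : nat * seq bool :=
  if unpickle k : option (nat * (nat * seq bool)) is Some (_, p) then p else (0%N, [::]).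

Lemma block_param_cofinal p N : exists2 k, (N <= k)%N & block_param k = p.
Proof.
have inj_code : injective (fun j : nat => pickle (j, p)).
  by move=> j j' /(pcan_inj pickleK)[].
have [j Nj] := injective_gtn inj_code N.
by exists (pickle (j, p)); rewrite 1?ltnW // /block_param pickleK.
Qed.

Lemma is_run_ext (b b' : nat -> bool) p p' m :
  (forall j, (j <= m.+1)%N -> b (p + j) = b' (p' + j)) -> is_run b p m -> is_run b' p' m.
Proof.
move=> bb' [p_off run_on run_end]; split.
- by rewrite -[p']addn0 -bb' ?addn0.
- by move=> j /andP[j_gt0 jm]; rewrite -bb' ?run_on ?j_gt0 // (leq_trans jm).
- by rewrite -bb'.
Qed.

Definition delay (k : nat) (b : nat -> bool) (r : nat) : bool := (k <= r)%N && b (r - k).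

Lemma is_run_delay k b q m : b 0 = false -> (0 < m)%N ->
  is_run (delay k b) q m -> is_run b (q - k) m.
Proof.
move=> b0 m_gt0 run; have [_ run_on _] := run.
have kq : (k <= q)%N.
  have /andP[kq1 b1] := run_on 1%N m_gt0; rewrite leqNgt; apply/negP => qk.
  by move: b1; rewrite (_ : q + 1 = k)%N ?subnn ?b0 //; lia.
apply: is_run_ext run => j _.
by rewrite /delay addnBAC // (leq_trans kq) ?leq_addr.
Qed.

(* The [K] zeros before the occurrence handle the coordinates whose orbit joins
   that of [th] late. *)
Definition occurs (c d : nat -> bool) := forall K N, exists n,
  [/\ (N <= n)%N, forall h, (h <= K)%N -> c (n + h) = d h &
      forall h, (0 < h <= K)%N -> c (n - h) = false].

Section Code.
Variable t : nat -> bool.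

(* On [[2^k, 2^(k+1))], [code t] is [k] zeros followed by the pattern with run
   length [marker i (t i)] and bits [u], where [(i, u) := block_param k], provided
   this fits; otherwise it is zero there. *)
Definition block (k : nat) : nat -> bool :=
  let: (i, u) := block_param k in
  let m := marker i (t i) in
  if (k + m.+2 + (size u).*2 <= 2 ^ k)%N then delay k (pattern m (nth false u))
  else fun => false.

Definition code (n : nat) : bool := block (trunc_log 2 n) (n - 2 ^ trunc_log 2 n).

Lemma block_le k r : (r <= k)%N -> block k r = false.
Proof.
rewrite /block /delay; case: block_param => i u; case: ifP => // _.
by rewrite leq_eqVlt => /predU1P[->|/ltn_geF->]; rewrite ?subnn ?pattern0 ?andbF.
Qed.

Lemma block_ge k r : (2 ^ k <= r)%N -> block k r = false.
Proof.
rewrite /block /delay; case: block_param => i u; case: ifP => // fits kr.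
by rewrite pattern_nth_oversize ?andbF //; lia.
Qed.

Lemma code_block k r : (r <= 2 ^ k)%N -> code (2 ^ k + r) = block k r.
Proof.
rewrite leq_eqVlt => /predU1P[->|rk].
  by rewrite block_ge // addnn -mul2n -expnS /code trunc_expnK // subnn block_le.
by rewrite /code (@trunc_log_eq _ k) ?addKn // leq_addr expnS mul2n -addnn ltn_add2l.
Qed.

Lemma block_run k q m : (0 < m)%N -> is_run (block k) q m ->
  m = 1%N \/ exists i, m = marker i (t i).
Proof.
rewrite /block; case: block_param => i u; case: ifP => _ m_gt0 run; last first.
  by have [_ /(_ 1%N m_gt0) //] := run.
have [->|->] := pattern_run m_gt0 (is_run_delay (pattern0 _ _) m_gt0 run).
  by right; exists i.
by left.
Qed.

Lemma code_run p m : (0 < m)%N -> is_run code p m ->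
  m = 1%N \/ exists i, m = marker i (t i).
Proof.
move=> m_gt0 run; have [_ run_on _] := run.
set k := trunc_log 2 p.+1.
have /andP[kp1 pk1] : (2 ^ k <= p.+1 < 2 ^ k.+1)%N by rewrite trunc_logP // trunc_log_ltn.
have exp2S : (2 ^ k.+1 = 2 ^ k + 2 ^ k)%N by rewrite expnS mul2n addnn.
have kp : (2 ^ k <= p)%N.
  rewrite leqNgt; apply/negP => pk; have := run_on 1%N m_gt0.
  by rewrite addn1 (_ : p.+1 = 2 ^ k + 0) ?code_block ?block_le //; lia.
have def_p : p = (2 ^ k + (p - 2 ^ k))%N by rewrite subnKC.
have run_in : (p - 2 ^ k + m.+1 <= 2 ^ k)%N.
  rewrite leqNgt; apply/negP => out.
  have := run_on (2 ^ k - (p - 2 ^ k))%N; rewrite (_ : p + _ = 2 ^ k + 2 ^ k)%N; last lia.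
  by rewrite code_block ?block_ge //; lia.
apply: block_run m_gt0 _; apply: is_run_ext run => j jm.
by rewrite {1}def_p -addnA code_block //; lia.
Qed.

Lemma occurs_code_pattern i f : occurs code (pattern (marker i (t i)) f).
Proof.
move=> K N; set m := marker i (t i).
have [k Lk param_k] := block_param_cofinal (i, mkseq f K) (N + K + m.+2 + K.*2).
have k2k : (k.*2 <= 2 ^ k)%N.
  by case: k {Lk param_k} => // k; rewrite expnS mul2n leq_double ltn_expl.
have block_k r : block k r = delay k (pattern m (nth false (mkseq f K))) r.
  by rewrite /block param_k size_mkseq ifT //; lia.
exists (2 ^ k + k)%N; split=> [|h hK|h /andP[_ hK]]; first lia.
  by rewrite -addnA code_block ?block_k /delay ?leq_addr ?addKn ?pattern_mkseq //; lia.
by rewrite -addnBA ?code_block ?block_le ?leq_subr //; lia.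
Qed.

Lemma occurs_code_false : occurs code (fun => false).
Proof.
move=> K N; set k := (N + K.*2).+1.
have k2k : (k < 2 ^ k)%N := ltn_expl k (ltnSn 1).
exists (2 ^ k + K)%N; split=> [|h hK|h /andP[_ hK]]; first lia.
  by rewrite -addnA code_block ?block_le //; lia.
by rewrite -addnBA ?code_block ?block_le //; lia.
Qed.

End Code.

Lemma seq_witness_bound (T : eqType) (P : T -> nat -> Prop) (F : seq T) :
  exists K, forall g, g \in F -> (exists n, P g n) -> exists2 n, (n <= K)%N & P g n.
Proof.
elim: F => [|g F [K bound]]; first by exists 0%N.
case: (pselect (exists n, P g n)) => [[n Pgn]|noP].
  exists (maxn n K) => h /predU1P[-> _|/bound hF /hF[n' n'K Pn']].
    by exists n; rewrite ?leq_maxl.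
  by exists n'; rewrite // (leq_trans n'K) ?leq_maxr.
by exists K => h /predU1P[-> /noP|/bound].
Qed.

Lemma bool_seq_uncountable : ~ countable [set: nat -> bool].
Proof.
move=> /countable_injP[f f_inj].
pose g n := xget (fun => false) [set t | f t = n].
have gK t : g (f t) = t.
  rewrite /g; case: xgetP => [t' /= ft'|no]; last by case: (no t).
  by apply: f_inj; rewrite ?in_setT.
pose diag n := ~~ g n n.
by have := congr1 (fun t => t (f diag)) (gK diag); rewrite /diag; case: (g _ _).
Qed.

Lemma uncountable_of_inj (T : Type) (A : set T) (h : (nat -> bool) -> T) :
  injective h -> (forall f, A (h f)) -> ~ countable A.
Proof.
move=> h_inj Ah /countable_injP[f f_inj]; apply: bool_seq_uncountable.
apply/countable_injP; exists (f \o h) => t t' _ _ /= eq_ft.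
by apply/h_inj/f_inj; rewrite ?inE.
Qed.

Section Coding.
Variables (X : finType) (G : countType) (phi : G -> G) (x0 x1 : X) (th : G).
Hypotheses (x01 : x0 != x1) (th_nqp : ~ quasi_periodic phi th).

Local Notation s := (@gen_shift X G phi).
Local Notation orbit n := (iter n phi th).

Definition bit (b : bool) : X := if b then x1 else x0.

Lemma bit_inj : injective bit.
Proof. by case; case=> // /eqP; rewrite ?(negbTE x01) // eq_sym (negbTE x01). Qed.

Lemma orbit_inj : injective (fun n => orbit n).
Proof.
move=> i j /= eq_ij; case: (ltngtP i j) => // ij; case: th_nqp.
  by apply/quasi_periodicP; exists i, j.
by apply/quasi_periodicP; exists j, i.
Qed.

(* [g] sits at position [i] of the orbit of [th] when [phi^j g = phi^(i + j) th]
   for some [j]; by injectivity of the orbit this position is unique. *)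
Definition coding (c : nat -> bool) : gen_shift_space X G :=
  fun g => bit `[< exists i j, iter j phi g = orbit (i + j) /\ c i >].

Lemma coding_meet c g j k : iter j phi g = orbit k ->
  coding c g = bit ((j <= k)%N && c (k - j)).
Proof.
move=> gk; congr bit; case: asboolP => [[i [j' [gi ci]]]|none].
  have : orbit (j' + k) = orbit (j + (i + j')).
    by rewrite iterD -gk -iterD addnC iterD gi -iterD.
  by move/orbit_inj => eq_k; rewrite (_ : k = i + j)%N ?leq_addl ?addnK //; lia.
apply/esym/negbTE/negP => /andP[jk ck]; apply: none.
by exists (k - j)%N, j; rewrite subnK.
Qed.

Lemma coding_orbit c n : coding c (orbit n) = bit (c n).
Proof. by rewrite (@coding_meet _ _ 0 n) ?subn0. Qed.

Lemma coding_off c g : ~ (exists j k, iter j phi g = orbit k) -> coding c g = bit false.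
Proof.
move=> none; congr bit; apply/asboolPn => -[i [j [gi _]]].
by apply: none; exists j, (i + j)%N.
Qed.

Lemma omega_lim_coding c d : occurs c d -> omega_lim s (coding c) (coding d).
Proof.
move=> cd; apply/omega_lim_gen_shiftP => F N.
pose meets g K := exists j k, [/\ (j <= K)%N, (k <= K)%N & iter j phi g = orbit k].
have [K bound] := seq_witness_bound meets F.
have [n [Nn c_on c_off]] := cd K N.
exists n => // g gF.
case: (pselect (exists j k, iter j phi g = orbit k)) => [[j [k gk]]|none]; last first.
  rewrite !coding_off // => -[j [k gk]]; apply: none.
  by exists (j + n)%N, k; rewrite iterD.
have [K' K'K [j' [k' [jK kK gk']]]] : exists2 K', (K' <= K)%N & meets g K'.
  by apply: bound => //; exists (maxn j k), j, k; rewrite leq_maxl leq_maxr.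
have gnk : iter j' phi (iter n phi g) = orbit (n + k').
  by rewrite -iterD addnC iterD gk' -iterD.
rewrite (coding_meet _ gnk) (coding_meet _ gk'); congr bit.
case: (leqP j' k') => jk.
  rewrite (leq_trans jk (leq_addl _ _)) -addnBA // c_on //.
  exact: leq_trans (leq_subr _ _) (leq_trans kK K'K).
case: leqP => //= jnk; rewrite (_ : n + k' - j' = n - (j' - k'))%N ?c_off //; lia.
Qed.

Lemma omega_lim_coding_prefix c d K : omega_lim s (coding c) (coding d) ->
  exists n, forall h, (h <= K)%N -> c (n + h) = d h.
Proof.
move=> /omega_lim_gen_shiftP cd.
have [n _ cdK] := cd [seq orbit h | h <- iota 0 K.+1] 0%N.
exists n => h hK; apply: bit_inj.
rewrite -!coding_orbit iterD cdK //.
by apply: (map_f (fun h => orbit h)); rewrite mem_iota.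
Qed.

Lemma coding_not_periodic (d : nat -> bool) m :
  d m -> (forall n, (m < n)%N -> d n = false) -> ~ Per s (coding d).
Proof.
move=> dm d_off [n [n_gt0 per]].
have := congr1 (fun x => x (orbit m)) per.
rewrite /= iter_gen_shift -iterD !coding_orbit dm d_off => [/bit_inj //|].
by rewrite -{1}[m]add0n ltn_add2r.
Qed.

Local Notation coded t := (coding (code t)).

Lemma omega_lim_code_pattern t i f :
  omega_lim s (coded t) (coding (pattern (marker i (t i)) f)).
Proof. exact/omega_lim_coding/occurs_code_pattern. Qed.

Lemma not_omega_lim_code_pattern t t' i f : t i != t' i ->
  ~ omega_lim s (coded t') (coding (pattern (marker i (t i)) f)).
Proof.
set m := marker i (t i) => tt' /(omega_lim_coding_prefix m.+1)[n code_pat].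
have run : is_run (code t') n m.
  by apply: is_run_ext (pattern_is_run m f) => j jm; rewrite add0n code_pat.
have [m1|[i' /marker_inj[ii' ti']]] := code_run (isT : (0 < m)%N) run.
  by move: m1; rewrite /m /marker; case: (t i).
by move: tt'; rewrite ti' ii' eqxx.
Qed.

Lemma coded_inj : injective (fun t => coded t).
Proof.
move=> t t' /= eq_tt'; apply/funext => i; apply/eqP/negP => /negP tt'.
apply: (not_omega_lim_code_pattern (f := fun => false) tt').
by rewrite -eq_tt'; exact: omega_lim_code_pattern.
Qed.

Lemma omega_u_scrambled_coded t t' : t <> t' ->
  omega_u_scrambled_pair s (coded t) (coded t').
Proof.
move=> tt'; have /existsNP[i /eqP ti] : ~ forall i, t i = t' i by move/funext.
set m := marker i (t i); split.
- apply: (uncountable_of_inj (h := fun f => coding (pattern m f))) => [f f'|f].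
    move=> eq_ff'; apply/funext => j; apply: bit_inj.
    by rewrite -(pattern_bit m f) -(pattern_bit m f') -!coding_orbit eq_ff'.
  by split; [exact: omega_lim_code_pattern | exact: not_omega_lim_code_pattern].
- by exists (coding (fun => false)); split; exact/omega_lim_coding/occurs_code_false.
- exists (coding (pattern m (fun => false))); split; first exact: omega_lim_code_pattern.
  apply: (@coding_not_periodic _ m); first by rewrite pattern_head ?leqnn.
  move=> n mn; case: (leqP n m.+1) => [nm|nm]; last by rewrite pattern_tail ?andbF.
  by rewrite pattern_head // (_ : n = m.+1) ?ltnn ?andbF //; lia.
Qed.

Lemma omega_u_u_chaotic_of_not_quasi_periodic : omega_u_u_chaotic s.
Proof.
exists (range (fun t => coded t)); split; last first.
  by apply: (uncountable_of_inj coded_inj) => t; exists t.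
split=> [|_ _ [t _ <-] [t' _ <-] ne]; last first.
  by apply: omega_u_scrambled_coded => tt'; apply: ne; rewrite tt'.
exists (coded (fun => false)), (coded (fun => true)); split; try by eexists.
by move/coded_inj/(congr1 (fun t => t 0%N)).
Qed.

End Coding.

Lemma omega_chaotic_hierarchy (Y : topologicalType) (f : Y -> Y) :
  [/\ omega_u_u_chaotic f -> omega_u_inf_chaotic f,
      omega_u_inf_chaotic f -> omega_u_2_chaotic f,
      omega_u_inf_chaotic f -> omega_inf_inf_chaotic f,
      omega_u_2_chaotic f -> omega_inf_2_chaotic f &
      omega_inf_inf_chaotic f -> omega_inf_2_chaotic f].
Proof.
have u_inf x y : omega_u_scrambled_pair f x y -> omega_inf_scrambled_pair f x y.
  by case=> uncount meet aper; split=> // /finite_set_countable.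
have u_inf_set S : scrambled_set (omega_u_scrambled_pair f) S ->
    scrambled_set (omega_inf_scrambled_pair f) S.
  by case=> two scr; split=> // x y Sx Sy xy; apply/u_inf/scr.
split.
- by move=> [S [scr uncount]]; exists S; split=> // /finite_set_countable.
- by move=> [S [scr _]]; exists S.
- by move=> [S [scr inf]]; exists S; split; first exact: u_inf_set.
- by move=> [S scr]; exists S; exact: u_inf_set.
- by move=> [S [scr _]]; exists S.
Qed.

Theorem theorem3p7 (X : finType) (G : countType) (phi : G -> G)
  (hX : (1 < #|X|)%N) (g0 : G) :
  let P := exists theta : G, ~ quasi_periodic phi theta in
  let s := @gen_shift X G phi in
  [/\ P <-> omega_u_u_chaotic s,
      P <-> omega_u_inf_chaotic s,
      P <-> omega_u_2_chaotic s,
      P <-> omega_inf_inf_chaotic s &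
      P <-> omega_inf_2_chaotic s].
Proof.
move=> P s.
have [x0 [x1 [_ _ x01]]] := card_gt1P hX.
have P_uu : P -> omega_u_u_chaotic s.
  by move=> [th th_nqp]; exact: omega_u_u_chaotic_of_not_quasi_periodic x01 th_nqp.
have i2_P : omega_inf_2_chaotic s -> P.
  move=> chaos; apply: contrapT => notP.
  apply: (not_omega_inf_2_chaotic_of_quasi_periodic _ chaos) => th.
  by apply: contrapT => th_nqp; apply: notP; exists th.
have [uu_ui ui_u2 ui_ii u2_i2 ii_i2] := omega_chaotic_hierarchy s.
by split; split; auto.
Qed.
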